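(* Let $n_1,n_2,n_3$ be integers with $3\le n_1,n_2\le n_3$. If $3\max(n_1,n_2)\le 2n_3\le n_1n_2$, then the direct product graph $K_{n_1+1}\times K_{n_2+1}\times K_{n_3+1}$ has metric dimension $2(n_3+1)-1=2n_3+1$.
   Context: $K_{m_1}\times K_{m_2}\times K_{m_3}$ denotes the direct product of complete graphs: vertices are triples $(x_1,x_2,x_3)$ with $1\le x_i\le m_i$, and two vertices are adjacent iff they differ in every coordinate. A set $W$ of vertices is resolving if for every two distinct vertices $x,y\notin W$ some $w\in W$ has $d(x,w)\ne d(y,w)$ ($d$ = graph distance). The metric dimension is the minimum size of a resolving set. *)

From mathcomp Require Import all_boot.
Set Implicit Arguments. Unset Strict Implicit. Unset Printing Implicit Defensive.

Fixpoint ball (T : finType) (e : rel T) (k : nat) (x : T) : {set T} :=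
  match k with
  | 0 => [set x]
  | k'.+1 => ball e k' x :|: [set y | [exists z in ball e k' x, e z y]]
  end.

(* Any reachable vertex is
   reachable in at most #|T| steps, so searching k <= #|T| suffices. *)
Definition gdist (T : finType) (e : rel T) (x y : T) : option nat :=
  let ks := [seq k <- iota 0 #|T|.+1 | y \in ball e k x] in
  if ks is k :: _ then Some k else None.

Definition resolving (T : finType) (e : rel T) (W : {set T}) : Prop :=
  forall x y : T, x \notin W -> y \notin W -> x != y ->
    exists2 w, w \in W & gdist e x w != gdist e y w.

Definition metric_dim_eq (T : finType) (e : rel T) (d : nat) : Prop :=
  (exists W : {set T}, resolving e W /\ #|W| = d) /\
  (forall W : {set T}, resolving e W -> d <= #|W|).

(* Direct (tensor) product of complete graphs K_m1 x K_m2 x K_m3: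
   vertices are triples, adjacent iff they differ in every coordinate. *)
Definition KVert (m1 m2 m3 : nat) : finType := ('I_m1 * 'I_m2 * 'I_m3)%type.

Definition Kadj (m1 m2 m3 : nat) : rel (KVert m1 m2 m3) :=
  fun u v => [&& u.1.1 != v.1.1, u.1.2 != v.1.2 & u.2 != v.2].

From mathcomp Require Import all_boot zify.
Set Implicit Arguments. Unset Strict Implicit. Unset Printing Implicit Defensive.

(* The graph has diameter 2, so a vertex outside W is determined by its
   adjacency pattern to W.  Lower bound: if two layers (third coordinate) held
   at most two vertices of W together, some grid position (a, b) would share a
   row or column with each of them, and the two vertices (a, b, c), (a, b, c')
   would not be separated; hence all layers but one carry at least two vertices
   of W.  Upper bound: in every nonzero layer put two vertices in different rows
   and columns, plus the origin; this resolves as soon as all these cells are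
   distinct, the "anticells" (the two other corners of each layer's rectangle)
   are distinct, and every row and every column is met in three layers. *)

Lemma exists_ord_neq2 n (a b : 'I_n) : 2 < n -> exists c : 'I_n, (c != a) && (c != b).
Proof.
move=> n_gt2; have : 0 < #|~: [set a; b]|.
  by have := cardsC [set a; b]; rewrite cards2 card_ord; case: (a != b); lia.
by case/card_gt0P => c; rewrite !inE negb_or; exists c.
Qed.

Lemma card_le2_sub (T : finType) (x0 : T) (A : {set T}) :
  #|A| <= 2 -> exists x y, A \subset [set x; y].
Proof.
move=> A_le2; have : (#|A| == 0) || (#|A| == 1) || (#|A| == 2) by lia.
case/orP => [/orP[]|].
- by rewrite cards_eq0 => /eqP ->; exists x0, x0; apply: sub0set.
- by case/cards1P => x ->; exists x, x; rewrite setUid.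
- by case/cards2P => x [y [_ ->]]; exists x, y.
Qed.

Lemma gdist_eq_Some (T : finType) (e : rel T) (x y : T) d :
  d <= #|T| -> y \in ball e d x -> (forall k, k < d -> y \notin ball e k x) ->
  gdist e x y = Some d.
Proof.
move=> d_le y_in y_out; rewrite /gdist.
have -> : #|T|.+1 = d + (#|T| - d).+1 by lia.
rewrite iotaD filter_cat add0n /= y_in.
have -> // : [seq k <- iota 0 d | y \in ball e k x] = [::].
apply/eqP; rewrite -[_ == _]negbK -has_filter; apply/hasPn => k.
by rewrite mem_iota add0n => /andP[_ /y_out].
Qed.

Section Distance.
Variables m1 m2 m3 : nat.
Hypotheses (m1_gt2 : 2 < m1) (m2_gt2 : 2 < m2) (m3_gt2 : 2 < m3).
Local Notation T := (KVert m1 m2 m3).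
Local Notation e := (@Kadj m1 m2 m3).

Lemma Kadj_common_neighbour (x y : T) : exists z, e x z && e z y.
Proof.
have [a /andP[xa ya]] := exists_ord_neq2 x.1.1 y.1.1 m1_gt2.
have [b /andP[xb yb]] := exists_ord_neq2 x.1.2 y.1.2 m2_gt2.
have [c /andP[xc yc]] := exists_ord_neq2 x.2 y.2 m3_gt2.
by exists (a, b, c); rewrite /Kadj /= !(eq_sym x.1.1, eq_sym x.1.2, eq_sym x.2) xa xb xc ya yb yc.
Qed.

Lemma Kball1 (x y : T) : (y \in ball e 1 x) = (y == x) || e x y.
Proof.
rewrite /= !inE; congr (_ || _); apply/existsP/idP => [[z /andP[]]|xy].
  by rewrite inE => /eqP ->.
by exists x; rewrite inE eqxx.
Qed.

Lemma Kball2 (x y : T) : y \in ball e 2 x.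
Proof.
rewrite [ball e 2 x]/= !inE; apply/orP; right; apply/existsP.
have [z /andP[xz zy]] := Kadj_common_neighbour x y.
by exists z; rewrite zy andbT Kball1 xz orbT.
Qed.

Lemma gdist_Kadj (x y : T) :
  gdist e x y = Some (if y == x then 0 else if e x y then 1 else 2).
Proof.
have cardT : 2 <= #|T|.
  rewrite /KVert !card_prod !card_ord; apply: leq_trans (leq_pmull _ _) => //=; lia.
have Kball0 : (y \in ball e 0 x) = (y == x) by rewrite inE.
case: ifP => [/eqP ->|yx]; first by apply: gdist_eq_Some; rewrite ?inE.
case: ifP => xy; apply: gdist_eq_Some; rewrite ?Kball1 ?Kball2 ?yx ?xy //; try lia.
- by case=> //; rewrite Kball0 yx.
- by case=> [|[]] // _; rewrite ?Kball0 ?Kball1 ?yx ?xy.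
Qed.

Lemma resolving_Kadj (W : {set T}) :
  resolving e W <-> (forall x y, x \notin W -> y \notin W -> x != y ->
                      exists2 w, w \in W & e x w != e y w).
Proof.
have gdist_out z w : z \notin W -> w \in W -> gdist e z w = Some (if e z w then 1 else 2).
  by move=> zW wW; rewrite gdist_Kadj; case: eqP => // wz; rewrite -wz wW in zW.
split=> resW x y xW yW xy; have [w wW sep] := resW x y xW yW xy; exists w => //.
  by apply: contra sep => /eqP xyw; rewrite !gdist_out // xyw.
by rewrite !gdist_out //; apply: contra sep; case: (e x w); case: (e y w).
Qed.

End Distance.

Definition aligned m1 m2 (u v : 'I_m1 * 'I_m2) := (u.1 == v.1) || (u.2 == v.2).

Lemma exists_aligned2 m1 m2 (v1 v2 : 'I_m1 * 'I_m2) : 2 < m1 -> 2 < m2 ->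
  exists u, [/\ u != v1, u != v2, aligned u v1 & aligned u v2].
Proof.
case: v1 v2 => [a1 b1] [a2 b2]; rewrite /aligned /= => m1_gt2 m2_gt2.
case: (eqVneq a1 a2) => [<-|a12].
  have [b /andP[bb1 bb2]] := exists_ord_neq2 b1 b2 m2_gt2.
  by exists (a1, b); rewrite !xpair_eqE /= eqxx (negbTE bb1) (negbTE bb2).
case: (eqVneq b1 b2) => [<-|b12].
  have [a /andP[aa1 aa2]] := exists_ord_neq2 a1 a2 m1_gt2.
  by exists (a, b1); rewrite !xpair_eqE /= eqxx (negbTE aa1) (negbTE aa2) !orbT.
by exists (a1, b2); rewrite !xpair_eqE /= !eqxx (negbTE a12) eq_sym (negbTE b12) !orbT.
Qed.

Section LowerBound.
Variables m1 m2 m3 : nat.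
Hypotheses (m1_gt2 : 2 < m1) (m2_gt2 : 2 < m2) (m3_gt2 : 2 < m3).
Local Notation T := (KVert m1 m2 m3).
Local Notation e := (@Kadj m1 m2 m3).

Definition layer_count (W : {set T}) (c : 'I_m3) := #|[set w in W | w.2 == c]|.

Lemma resolving_layer_pair (W : {set T}) c c' : resolving e W -> c != c' ->
  3 <= layer_count W c + layer_count W c'.
Proof.
move=> /(resolving_Kadj m1_gt2 m2_gt2 m3_gt2) resW cc'; rewrite leqNgt; apply/negP => small.
pose V := [set w in W | (w.2 == c) || (w.2 == c')].
have V_le2 : #|V| <= 2.
  have -> : V = [set w in W | w.2 == c] :|: [set w in W | w.2 == c'].
    by apply/setP => w; rewrite !inE andb_orr.
  by rewrite cardsU; rewrite /layer_count in small; lia.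
have [v1 [v2 Vsub]] :=
  card_le2_sub (Ordinal (ltnW (ltnW m1_gt2)), Ordinal (ltnW (ltnW m2_gt2)), c) V_le2.
have [u [uv1 uv2 al1 al2]] := exists_aligned2 v1.1 v2.1 m1_gt2 m2_gt2.
have Vaway v : v \in V -> (v.1 != u) && aligned u v.1.
  by move/(subsetP Vsub); rewrite !inE => /orP[] /eqP ->; rewrite eq_sym ?uv1 ?uv2.
have uW d : (d == c) || (d == c') -> (u, d) \notin W.
  move=> dcc'; apply/negP => uW.
  have /Vaway : (u, d) \in V by rewrite inE uW.
  by rewrite eqxx.
have [w wW] : exists2 w, w \in W & e (u, c) w != e (u, c') w.
  by apply: resW; rewrite ?uW ?eqxx ?orbT // xpair_eqE eqxx.
rewrite /Kadj /=; case: (boolP ((w.2 == c) || (w.2 == c'))) => [wcc'|].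
  have /Vaway /andP[_] : w \in V by rewrite inE wW.
  by rewrite /aligned => /orP[] /eqP ->; rewrite eqxx ?andbF.
by rewrite negb_or (eq_sym c) (eq_sym c') => /andP[/negbTE -> /negbTE ->]; rewrite eqxx.
Qed.

Lemma resolving_card_ge (W : {set T}) : resolving e W -> (2 * m3).-1 <= #|W|.
Proof.
move=> resW.
have -> : #|W| = \sum_(c : 'I_m3) layer_count W c.
  rewrite -sum1_card (partition_big (fun w : T => w.2) xpredT) //=.
  by apply: eq_bigr => c _; rewrite /layer_count -sum1_card; apply: eq_bigl => w; rewrite inE.
case: (boolP [exists c, layer_count W c <= 1]) => [/existsP[c0 c0_le1]|/existsPn big].
  rewrite (bigD1 c0) //=.
  have others : \sum_(c < m3 | c != c0) (3 - layer_count W c0) <=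
                \sum_(c < m3 | c != c0) layer_count W c.
    by apply: leq_sum => c cc0; have := resolving_layer_pair resW cc0; lia.
  apply: leq_trans (leq_add (leqnn _) others); rewrite sum_nat_const cardC1 card_ord.
  by move: c0_le1; case: (layer_count W c0) => [|[|]] // _; lia.
have : \sum_(c : 'I_m3) 2 <= \sum_(c : 'I_m3) layer_count W c.
  by apply: leq_sum => c _; have := big c; lia.
by rewrite sum_nat_const card_ord; lia.
Qed.

End LowerBound.

Definition vrow m1 m2 m3 (x : KVert m1 m2 m3) : nat := x.1.1.
Definition vcol m1 m2 m3 (x : KVert m1 m2 m3) : nat := x.1.2.
Definition vlayer m1 m2 m3 (x : KVert m1 m2 m3) : nat := x.2.

Lemma KadjE m1 m2 m3 (x y : KVert m1 m2 m3) :
  Kadj x y = [&& vrow x != vrow y, vcol x != vcol y & vlayer x != vlayer y].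
Proof. by []. Qed.

Lemma KVert_eqP m1 m2 m3 (x y : KVert m1 m2 m3) :
  vrow x = vrow y -> vcol x = vcol y -> vlayer x = vlayer y -> x = y.
Proof.
case: x y => [[? ?] ?] [[? ?] ?]; rewrite /vrow /vcol /vlayer /=.
by move=> /val_inj-> /val_inj-> /val_inj->.
Qed.

Section LayerPattern.
Variables n1 n2 n3 : nat.
Hypotheses (n1_gt1 : 1 < n1) (n2_gt1 : 1 < n2) (n3_gt1 : 1 < n3).

Definition in_three_layers (P : nat -> bool -> Prop) := exists l1 s1 l2 s2 l3 s3,
  [/\ l1 < n3, l2 < n3, l3 < n3, [/\ l1 <> l2, l1 <> l3 & l2 <> l3] &
      [/\ P l1 s1, P l2 s2 & P l3 s3]].

Definition unique_in_layers (P : nat -> bool -> Prop) (K : nat -> bool -> bool) :=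
  forall l s l' s', l < n3 -> l' < n3 -> P l s -> P l' s' -> K l s -> K l' s' -> l = l'.

Lemma in_three_layers_avoid2 P K1 K2 : in_three_layers P ->
  unique_in_layers P K1 -> unique_in_layers P K2 ->
  exists l s, [/\ l < n3, P l s, ~~ K1 l s & ~~ K2 l s].
Proof.
move=> [l1 [s1 [l2 [s2 [l3 [s3 [L1 L2 L3 [D12 D13 D23] [P1 P2 P3]]]]]]]] U1 U2.
move: (U1 _ _ _ _ L1 L2 P1 P2) (U1 _ _ _ _ L1 L3 P1 P3) (U1 _ _ _ _ L2 L3 P2 P3).
move: (U2 _ _ _ _ L1 L2 P1 P2) (U2 _ _ _ _ L1 L3 P1 P3) (U2 _ _ _ _ L2 L3 P2 P3).
case E1: (K1 l1 s1); case F1: (K2 l1 s1); case E2: (K1 l2 s2); case F2: (K2 l2 s2);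
case E3: (K1 l3 s3); case F3: (K2 l3 s3) => V12 V13 V23 U12 U13 U23;
first [ by exists l1, s1; rewrite E1 F1 | by exists l2, s2; rewrite E2 F2
      | by exists l3, s3; rewrite E3 F3
      | by case: (D12 (U12 isT isT)) | by case: (D12 (V12 isT isT))
      | by case: (D13 (U13 isT isT)) | by case: (D13 (V13 isT isT))
      | by case: (D23 (U23 isT isT)) | by case: (D23 (V23 isT isT)) ].
Qed.

Variable cell : nat -> bool -> nat * nat.
Definition anticell l s := ((cell l s).1, (cell l (~~ s)).2).

Hypothesis cell_bounded : forall l s, l < n3 -> (cell l s).1 < n1 /\ (cell l s).2 < n2.
Hypothesis cell_rect : forall l, l < n3 ->
  (cell l true).1 <> (cell l false).1 /\ (cell l true).2 <> (cell l false).2.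
Hypothesis cell_inj : forall l l' s s', l < n3 -> l' < n3 -> cell l s = cell l' s' -> l = l'.
Hypothesis anticell_inj : forall l l' s s', l < n3 -> l' < n3 ->
  anticell l s = anticell l' s' -> l = l'.
Hypothesis row_in_three_layers :
  forall r, r < n1 -> in_three_layers (fun l s => (cell l s).1 = r).
Hypothesis col_in_three_layers :
  forall c, c < n2 -> in_three_layers (fun l s => (cell l s).2 = c).

Local Notation T := (KVert n1.+1 n2.+1 n3.+1).
Local Notation e := (@Kadj n1.+1 n2.+1 n3.+1).

(* Cells are numbered from 0 and vertex coordinates from 1, so that the origin
   is the only vertex of the resolving set with a zero coordinate. *)
Definition pattern_vertex l s : T :=
  (inord (cell l s).1.+1, inord (cell l s).2.+1, inord l.+1).

Definition origin : T := (ord0, ord0, ord0).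

Definition pattern_set : {set T} :=
  origin |: [set pattern_vertex (nat_of_ord p.1) p.2 | p : 'I_n3 * bool].

Lemma pattern_vertexE l s : l < n3 -> [/\ vrow (pattern_vertex l s) = (cell l s).1.+1,
  vcol (pattern_vertex l s) = (cell l s).2.+1 & vlayer (pattern_vertex l s) = l.+1].
Proof.
move=> l_lt; have [r_lt c_lt] := cell_bounded s l_lt.
by rewrite /vrow /vcol /vlayer /= !inordK.
Qed.

Lemma pattern_vertex_in l s : l < n3 -> pattern_vertex l s \in pattern_set.
Proof. by move=> l_lt; rewrite setU1r //; apply/imsetP; exists (Ordinal l_lt, s). Qed.

Definition separated (x y : T) := exists2 w, w \in pattern_set & e x w != e y w.

Lemma separated_sym x y : separated x y -> separated y x.
Proof. by case=> w wW xy; exists w; rewrite // eq_sym. Qed.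

Lemma separated_rows x y : vrow x != vrow y -> separated x y.
Proof.
wlog x_gt0 : x y / 0 < vrow x.
  move=> sep xy; case: (posnP (vrow x)) => [x0|x_gt0]; last exact: sep.
  by apply: separated_sym; apply: sep; rewrite 1?eq_sym //; move: xy; rewrite x0; lia.
move=> xy; have r_lt : (vrow x).-1 < n1 by have := ltn_ord x.1.1; rewrite /vrow in x_gt0 *; lia.
have layer_unique : unique_in_layers (fun l s => (cell l s).1 = (vrow x).-1)
    (fun l s => l.+1 == vlayer y).
  by move=> l s l' s' _ _ _ _ /eqP <- /eqP [].
have col_unique : unique_in_layers (fun l s => (cell l s).1 = (vrow x).-1)
    (fun l s => (cell l s).2.+1 == vcol y).
  move=> l s l' s' l_lt l'_lt r r' /eqP c /eqP c'.
  apply: (cell_inj (s := s) (s' := s') l_lt l'_lt).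
  by rewrite [cell l s]surjective_pairing [cell l' s']surjective_pairing r r'; congr pair; lia.
have [l [s [l_lt r_ls layer_y col_y]]] :=
  in_three_layers_avoid2 (row_in_three_layers r_lt) layer_unique col_unique.
have [row_v col_v layer_v] := pattern_vertexE s l_lt.
exists (pattern_vertex l s); first exact: pattern_vertex_in.
rewrite !KadjE row_v col_v layer_v r_ls prednK // eqxx /=.
by rewrite (eq_sym (vrow y)) xy (eq_sym (vcol y)) col_y (eq_sym (vlayer y)) layer_y.
Qed.

Lemma separated_cols x y : vcol x != vcol y -> separated x y.
Proof.
wlog x_gt0 : x y / 0 < vcol x.
  move=> sep xy; case: (posnP (vcol x)) => [x0|x_gt0]; last exact: sep.
  by apply: separated_sym; apply: sep; rewrite 1?eq_sym //; move: xy; rewrite x0; lia.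
move=> xy; have c_lt : (vcol x).-1 < n2 by have := ltn_ord x.1.2; rewrite /vcol in x_gt0 *; lia.
have layer_unique : unique_in_layers (fun l s => (cell l s).2 = (vcol x).-1)
    (fun l s => l.+1 == vlayer y).
  by move=> l s l' s' _ _ _ _ /eqP <- /eqP [].
have row_unique : unique_in_layers (fun l s => (cell l s).2 = (vcol x).-1)
    (fun l s => (cell l s).1.+1 == vrow y).
  move=> l s l' s' l_lt l'_lt c c' /eqP r /eqP r'.
  apply: (cell_inj (s := s) (s' := s') l_lt l'_lt).
  by rewrite [cell l s]surjective_pairing [cell l' s']surjective_pairing c c'; congr pair; lia.
have [l [s [l_lt c_ls layer_y row_y]]] :=
  in_three_layers_avoid2 (col_in_three_layers c_lt) layer_unique row_unique.
have [row_v col_v layer_v] := pattern_vertexE s l_lt.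
exists (pattern_vertex l s); first exact: pattern_vertex_in.
rewrite !KadjE row_v col_v layer_v c_ls prednK // eqxx andbF /=.
by rewrite (eq_sym (vcol y)) xy (eq_sym (vrow y)) row_y (eq_sym (vlayer y)) layer_y.
Qed.

Definition at_anticell (z : T) l :=
  [exists s, (vrow z, vcol z) == ((anticell l s).1.+1, (anticell l s).2.+1)].

Lemma separated_in_layer x y l : l < n3 -> vlayer x = l.+1 -> vlayer y != l.+1 ->
  ~~ at_anticell y l -> separated x y.
Proof.
move=> l_lt x_l y_l /existsPn y_anti; have [rows cols] := cell_rect l_lt.
have [s /andP[row_y col_y]] : exists s, (vrow y != (cell l s).1.+1) && (vcol y != (cell l s).2.+1).
  case: (boolP (vrow y == (cell l true).1.+1)) => [/eqP rt|rt].
    exists false; apply/andP; split; first by rewrite rt; apply/eqP => -[].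
    by apply: contra (y_anti true) => /eqP cf; rewrite /anticell rt cf.
  case: (boolP (vcol y == (cell l true).2.+1)) => [/eqP ct|ct]; last by exists true; rewrite rt ct.
  exists false; apply/andP; split; last by rewrite ct; apply/eqP => -[].
  by apply: contra (y_anti false) => /eqP rf; rewrite /anticell rf ct.
have [row_v col_v layer_v] := pattern_vertexE s l_lt.
exists (pattern_vertex l s); first exact: pattern_vertex_in.
by rewrite !KadjE row_v col_v layer_v x_l eqxx !andbF row_y col_y y_l.
Qed.

Lemma separated_layers x y : vrow x = vrow y -> vcol x = vcol y -> vlayer x != vlayer y ->
  separated x y.
Proof.
wlog x_lt : x y / vlayer x < vlayer y.
  move=> sep rx cx; rewrite neq_ltn => /orP[] lt.
    by apply: (sep x y lt rx cx); rewrite ltn_eqF.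
  by apply/separated_sym/(sep y x lt (esym rx) (esym cx)); rewrite ltn_eqF.
move=> rx cx _.
have ly_lt : (vlayer y).-1 < n3 by have := ltn_ord y.2; rewrite /vlayer in x_lt *; lia.
have anti_xy l : at_anticell x l = at_anticell y l by rewrite /at_anticell rx cx.
case: (boolP (at_anticell y (vlayer y).-1)) => [/existsP[s /eqP anti_y]|].
  have [rx_gt0 cx_gt0] : 0 < vrow x /\ 0 < vcol x by rewrite rx cx; case: anti_y => -> ->.
  case: (posnP (vlayer x)) => [x0|x_gt0].
    exists origin; first exact: setU11.
    rewrite !KadjE x0 eqxx !andbF -rx -cx (_ : vrow origin = 0) // (_ : vcol origin = 0) //.
    by rewrite (_ : vlayer origin = 0) //; lia.
  have lx_lt : (vlayer x).-1 < n3 by lia.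
  case: (boolP (at_anticell y (vlayer x).-1)) => [/existsP[s' /eqP anti_y']|].
    have same_anti : anticell (vlayer x).-1 s' = anticell (vlayer y).-1 s.
      move: anti_y anti_y'; rewrite /anticell /= => -[ry cy] [ry' cy'].
      by congr pair; lia.
    by have := anticell_inj lx_lt ly_lt same_anti; lia.
  by apply: separated_in_layer; rewrite ?prednK //; lia.
rewrite -anti_xy => x_anti; apply: separated_sym.
by apply: separated_in_layer x_anti; rewrite ?prednK //; lia.
Qed.

Lemma pattern_set_resolving : resolving e pattern_set.
Proof.
apply/resolving_Kadj => [||| x y _ _ xy]; try lia.
case: (eqVneq (vrow x) (vrow y)) => [rx|]; last exact: separated_rows.
case: (eqVneq (vcol x) (vcol y)) => [cx|]; last exact: separated_cols.
apply: separated_layers => //; apply: contra xy => /eqP lx.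
by apply/eqP/KVert_eqP.
Qed.

Lemma card_pattern_set : #|pattern_set| = 2 * n3 + 1.
Proof.
have layer_pv l s : l < n3 -> vlayer (pattern_vertex l s) = l.+1 by case/(pattern_vertexE s).
have origin_out : origin \notin [set pattern_vertex (nat_of_ord p.1) p.2 | p : 'I_n3 * bool].
  by apply/imsetP => -[[l s] _ /(congr1 (fun z : T => vlayer z))]; rewrite layer_pv.
rewrite cardsU1 origin_out card_imset; first by rewrite card_prod card_ord card_bool; lia.
move=> [l s] [l' s'] /= E.
have := congr1 (fun z : T => vlayer z) E; rewrite !layer_pv // => -[/val_inj ll'].
subst l'; congr pair; have [rows _] := cell_rect (ltn_ord l).
have := congr1 (fun z : T => vrow z) E; have [-> _ _] := pattern_vertexE s (ltn_ord l).
have [-> _ _] := pattern_vertexE s' (ltn_ord l).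
by case: s s' {E} => -[] //; lia.
Qed.

Lemma Kadj_metric_dim : metric_dim_eq e (2 * n3 + 1).
Proof.
split; first by exists pattern_set; split; [exact: pattern_set_resolving | exact: card_pattern_set].
move=> W resW; have := resolving_card_ge _ _ _ resW; lia.
Qed.

End LayerPattern.

Section Pattern.
Variables n1 m n3 : nat.
Hypotheses (n1_ge3 : 3 <= n1) (m_ge3 : 3 <= m)
           (max_le : 3 * maxn n1 m <= 2 * n3) (prod_ge : 2 * n3 <= n1 * m).

(* Rows 2t, 2t+1 (t < npairs) form a pair.  The regular layers k < nreg are cut
   into npairs consecutive blocks of at most m layers; layer k of block t has
   cells (2t, k) and (2t+1, k + shift), columns taken mod m.  For odd n1 the
   last row mid_row is covered as follows: for k in the window
   [moved_lo, moved_lo + nextra) the second cell of layer k moves to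
   (mid_row, k + shift), and the extra layer nreg + (k - moved_lo) gets the
   cells (mid_row, k) and the vacated (2t+1, k + shift).  Since shift is about
   m/2 and the window is short, no two cells or anticells collide. *)
Definition npairs := n1./2.
Definition nextra := if odd n1 then maxn 2 (n3 - npairs * m) else 0.
Definition nreg := n3 - nextra.
Definition moved_lo := nreg - m.
Definition shift := uphalf m.
Definition mid_row := n1.-1.

Definition block k := k * npairs %/ nreg.
Definition moved k := (moved_lo <= k) && (k < moved_lo + nextra).
Definition base l := if l < nreg then l else moved_lo + (l - nreg).
Definition top_row l := if l < nreg then 2 * block l else mid_row.
Definition bottom_row l :=
  if l < nreg then (if moved l then mid_row else (2 * block l).+1) else (2 * block (base l)).+1.
Definition side_row (b : bool) l := if b then top_row l else bottom_row l.
Definition offset (b : bool) := if b then 0 else shift.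

Definition pattern_cell l b := (side_row b l, (base l + offset b) %% m).

Lemma pattern_arith :
  [/\ [/\ 0 < npairs, 3 * npairs <= nreg, nreg <= npairs * m, m <= nreg & n3 = nreg + nextra],
      [/\ 0 < shift, shift < m, m <= 2 * shift, nextra + shift <= m & m + shift <= n3] &
      [/\ 0 < nextra -> odd n1, odd n1 -> 2 <= nextra, odd n1 -> mid_row = 2 * npairs,
          ~~ odd n1 -> n1 = 2 * npairs & moved_lo + nextra <= nreg]].
Proof.
have n1E : n1 = odd n1 + 2 * npairs by rewrite /npairs; lia.
have shiftE : shift = odd m + m./2 by rewrite /shift uphalf_half.
have prodE : n1 * m = odd n1 * m + 2 * (npairs * m) by rewrite {1}n1E mulnDl mulnA.
have npairs_gt0 : 0 < npairs by rewrite /npairs; lia.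
have : 3 * npairs <= npairs * m by rewrite mulnC leq_mul2l m_ge3 orbT.
have : m <= npairs * m by rewrite leq_pmull.
rewrite /moved_lo /nreg /nextra /mid_row; case: (boolP (odd n1)) => n1_odd /=.
- rewrite n1_odd mul1n in prodE.
  have m_ge4 : 4 <= m.
    case: (ltnP m 4) => // m_lt4; have m3 : m = 3 by lia.
    move: prodE prod_ge max_le n1E; rewrite m3 n1_odd; lia.
  by split; split; lia.
- by rewrite (negbTE n1_odd) mul0n add0n in prodE; split; split; lia.
Qed.

Lemma block_lt k : k < nreg -> block k < npairs.
Proof.
have [[npairs_gt0 _ _ m_le_nreg _] _ _] := pattern_arith.
by move=> k_lt; rewrite /block ltn_divLR; [rewrite mulnC ltn_pmul2l | lia].
Qed.

Lemma blockE k t : t * nreg <= k * npairs -> k * npairs < t.+1 * nreg -> block k = t.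
Proof.
have [[npairs_gt0 nreg_ge _ _ _] _ _] := pattern_arith.
move=> lo hi; apply/eqP; rewrite eqn_leq; apply/andP; split.
  by rewrite -ltnS /block ltn_divLR //; lia.
by rewrite /block leq_divRL //; lia.
Qed.

Lemma block_mod_inj k k' : k < nreg -> k' < nreg ->
  block k = block k' -> k %% m = k' %% m -> k = k'.
Proof.
have [[npairs_gt0 _ nreg_le _ _] _ _] := pattern_arith.
wlog le_kk' : k k' / k <= k'.
  move=> sym k_lt k'_lt eb em; case: (leqP k k') => [le|/ltnW le]; first exact: sym.
  exact/esym/(sym k' k le k'_lt k_lt (esym eb) (esym em)).
move=> k_lt k'_lt eq_block.
have near : k' < k + m.
  rewrite ltnNge; apply/negP => far.
  have : block k < block k'.
    have : (k + m) * npairs <= k' * npairs by rewrite leq_mul2r far orbT.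
    have := leq_divM (k * npairs) nreg.
    rewrite /block -[_ < _]/(_.+1 <= _) leq_divRL; last lia.
    rewrite mulSn mulnDl; nia.
  by rewrite eq_block ltnn.
rewrite -(subnKC le_kk') -{1}[k]addn0 => /eqP; rewrite eqn_modDl mod0n modn_small; lia.
Qed.

Lemma block_witness t : t < npairs ->
  exists k, k + 2 < nreg /\ forall j, j <= 2 -> block (k + j) = t.
Proof.
have [[npairs_gt0 nreg_ge _ _ _] _ _] := pattern_arith.
(* k = ceil (t * nreg / npairs) starts block t, which has at least 3 elements. *)
move=> t_lt; pose k := (t * nreg + npairs.-1) %/ npairs.
have := divn_eq (t * nreg + npairs.-1) npairs; rewrite -/k => kE.
have := ltn_pmod (t * nreg + npairs.-1) npairs_gt0.
have : t.+1 * nreg <= npairs * nreg by rewrite leq_mul2r t_lt orbT.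
move=> t_le mod_lt; exists k; split.
  by rewrite -(ltn_pmul2r npairs_gt0); nia.
by move=> j j_le; apply: blockE; nia.
Qed.

Lemma moved_mod_inj a a' : moved a -> moved a' -> a %% m = a' %% m -> a = a'.
Proof.
have [[_ _ _ m_le_nreg _] [_ _ _ nextra_shift _] _] := pattern_arith.
move=> /andP[lo hi] /andP[lo' hi'].
rewrite -(subnKC lo) -(subnKC lo') => /eqP; rewrite eqn_modDl !modn_small; lia.
Qed.

Lemma moved_shift_mod_neq a a' : moved a -> moved a' -> (a + shift) %% m != a' %% m.
Proof.
have [[_ _ _ m_le_nreg _] [shift_gt0 shift_lt shift_ge nextra_shift _] _] := pattern_arith.
move=> /andP[lo hi] /andP[lo' hi'].
rewrite -(subnKC lo) -(subnKC lo') -addnA eqn_modDl !modn_small; lia.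
Qed.

Lemma shift_mod_neq x : (x + shift) %% m != x %% m.
Proof.
have [_ [shift_gt0 shift_lt _ _ _] _] := pattern_arith.
by rewrite -{2}[x]addn0 eqn_modDl mod0n modn_small //; lia.
Qed.

Lemma base_lt l : l < n3 -> base l < nreg.
Proof.
have [[_ _ _ m_le_nreg n3E] _ [_ _ _ _ moved_le]] := pattern_arith.
by rewrite /base; case: ifP => //; lia.
Qed.

Lemma base_inj_extra l l' : nreg <= l -> nreg <= l' -> base l = base l' -> l = l'.
Proof. by rewrite /base => l_ge l'_ge; rewrite !ifN; lia. Qed.

Lemma top_rowP l : l < n3 ->
  (l < nreg /\ [/\ top_row l = 2 * block l, base l = l & block l < npairs]) \/
  (nreg <= l /\ [/\ top_row l = 2 * npairs, moved (base l) & odd n1]).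
Proof.
have [[_ _ _ m_le_nreg n3E] _ [nextra_odd _ odd_mid _ moved_le]] := pattern_arith.
move=> l_lt; rewrite /top_row /base /moved; case: ifP => l_reg.
  by left; split => //; split => //; apply: block_lt.
have n1_odd : odd n1 by apply: nextra_odd; lia.
by right; split; [lia | split => //; [rewrite odd_mid | apply/andP; split; lia]].
Qed.

Lemma bottom_rowP l : l < n3 ->
  [\/ l < nreg /\ [/\ ~~ moved l, bottom_row l = (2 * block l).+1, base l = l & block l < npairs],
      l < nreg /\ [/\ moved l, bottom_row l = 2 * npairs, base l = l & odd n1] |
      nreg <= l /\
        [/\ moved (base l), bottom_row l = (2 * block (base l)).+1 & block (base l) < npairs]].
Proof.
have [[_ _ _ m_le_nreg n3E] _ [nextra_odd _ odd_mid _ moved_le]] := pattern_arith.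
move=> l_lt; have base_reg := base_lt l_lt.
rewrite /bottom_row; case: ifP => l_reg.
  have baseE : base l = l by rewrite /base l_reg.
  case: ifP => l_moved; last by constructor 1; split => //; split => //; apply: block_lt.
  have n1_odd : odd n1 by apply: nextra_odd; move: l_moved; rewrite /moved; lia.
  by constructor 2; split => //; split => //; rewrite odd_mid.
constructor 3; split; first lia.
split => //; last exact: block_lt.
by rewrite /moved /base l_reg; apply/andP; split; lia.
Qed.

Lemma side_row_inj l l' b : l < n3 -> l' < n3 ->
  side_row b l = side_row b l' -> base l %% m = base l' %% m -> l = l'.
Proof.
move=> l_lt l'_lt; have base_reg := base_lt l_lt; have base_reg' := base_lt l'_lt.
rewrite /side_row; case: b.
  case: (top_rowP l_lt) => [[l_reg [-> -> b_lt]]|[l_ext [-> moved_l _]]];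
  case: (top_rowP l'_lt) => [[l'_reg [-> -> b_lt']]|[l'_ext [-> moved_l' _]]] rows cols; try lia.
  - by apply: block_mod_inj => //; lia.
  - by apply: base_inj_extra => //; apply: moved_mod_inj.
case: (bottom_rowP l_lt) =>
  [[l_reg [nmoved_l -> -> b_lt]]|[l_reg [moved_l -> -> _]]|[l_ext [moved_l -> b_lt]]];
case: (bottom_rowP l'_lt) =>
  [[l'_reg [nmoved_l' -> -> b_lt']]|[l'_reg [moved_l' -> -> _]]|[l'_ext [moved_l' -> b_lt']]]
  rows cols; try lia.
- by apply: block_mod_inj => //; lia.
- have baseE : l = base l' by apply: block_mod_inj => //; lia.
  by move: nmoved_l; rewrite baseE moved_l'.
- exact: moved_mod_inj.
- have baseE : base l = l' by apply: block_mod_inj => //; lia.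
  by move: nmoved_l'; rewrite -baseE moved_l.
- by apply: base_inj_extra => //; apply: block_mod_inj => //; lia.
Qed.

Lemma top_bottom_row_moved l l' : l < n3 -> l' < n3 -> top_row l = bottom_row l' ->
  moved (base l) /\ moved (base l').
Proof.
move=> l_lt l'_lt.
case: (top_rowP l_lt) => [[_ [-> _ b_lt]]|[_ [-> moved_l _]]];
case: (bottom_rowP l'_lt) => [[_ [_ -> _ _]]|[_ [moved_l' -> -> _]]|[_ [_ -> _]]]; lia.
Qed.

Lemma pattern_offset_inj l l' b b' c c' : l < n3 -> l' < n3 ->
  side_row b l = side_row b' l' -> (b == b') = (c == c') ->
  (base l + offset c) %% m = (base l' + offset c') %% m -> l = l'.
Proof.
move=> l_lt l'_lt rows; case: (eqVneq b b') rows => [<- rows /esym/eqP <-|bb' rows cc'].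
  by move/eqP; rewrite eqn_modDr => /eqP; apply: side_row_inj rows.
have [moved_l moved_l'] : moved (base l) /\ moved (base l').
  case: b b' bb' rows => -[] //= _ rows; first exact: top_bottom_row_moved.
  by apply/and_comm/top_bottom_row_moved.
case: c c' cc' => -[] //= _; rewrite addn0 => /eqP.
- by rewrite eq_sym (negbTE (moved_shift_mod_neq moved_l' moved_l)).
- by rewrite (negbTE (moved_shift_mod_neq moved_l moved_l')).
Qed.

Lemma pattern_cell_inj l l' b b' : l < n3 -> l' < n3 ->
  pattern_cell l b = pattern_cell l' b' -> l = l'.
Proof. by move=> l_lt l'_lt [rows cols]; apply: pattern_offset_inj rows _ cols. Qed.

Lemma pattern_anticell_inj l l' b b' : l < n3 -> l' < n3 ->
  anticell pattern_cell l b = anticell pattern_cell l' b' -> l = l'.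
Proof.
move=> l_lt l'_lt [rows cols]; apply: pattern_offset_inj rows _ cols => //.
by case: b b' => -[].
Qed.

Lemma pattern_cell_rect l : l < n3 -> (pattern_cell l true).1 <> (pattern_cell l false).1 /\
  (pattern_cell l true).2 <> (pattern_cell l false).2.
Proof.
move=> l_lt; split; last by rewrite /= addn0 => /eqP; rewrite eq_sym (negbTE (shift_mod_neq _)).
rewrite /= /side_row.
case: (top_rowP l_lt) => [[l_reg [-> _ b_lt]]|[l_ext [-> _ _]]];
case: (bottom_rowP l_lt) => [[? [_ -> _ _]]|[? [_ -> _ _]]|[? [_ -> _]]]; lia.
Qed.

Lemma pattern_cell_bounded l b : l < n3 -> (pattern_cell l b).1 < n1 /\ (pattern_cell l b).2 < m.
Proof.
have n1E : n1 = odd n1 + 2 * npairs by rewrite /npairs; lia.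
move=> l_lt; split; last by rewrite ltn_mod; lia.
rewrite /= /side_row; case: b.
  by case: (top_rowP l_lt) => [[_ [-> _ ?]]|[_ [-> _ ?]]]; lia.
by case: (bottom_rowP l_lt) => [[_ [_ -> _ ?]]|[_ [_ -> _ ?]]|[_ [_ -> ?]]]; lia.
Qed.

Definition bottom_owner k := if moved k then nreg + (k - moved_lo) else k.

Lemma bottom_ownerP k : k < nreg -> [/\ bottom_owner k < n3, base (bottom_owner k) = k &
  bottom_row (bottom_owner k) = (2 * block k).+1].
Proof.
have [[_ _ _ m_le_nreg n3E] _ _] := pattern_arith.
move=> k_lt; rewrite /bottom_owner /bottom_row /base; case: ifP => [/andP[lo hi]|k_moved].
  have ext : (nreg + (k - moved_lo) < nreg) = false by lia.
  have baseE : moved_lo + (nreg + (k - moved_lo) - nreg) = k by lia.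
  by rewrite !ext baseE; split => //; lia.
by rewrite k_lt k_moved; split => //; lia.
Qed.

Lemma pattern_row_in_three_layers r : r < n1 ->
  in_three_layers n3 (fun l b => (pattern_cell l b).1 = r).
Proof.
have [[npairs_gt0 nreg_ge _ m_le_nreg n3E] _ [_ odd_nextra odd_mid even_n1 moved_le]] :=
  pattern_arith.
have n1E : n1 = odd n1 + 2 * npairs by rewrite /npairs; lia.
move=> r_lt; case: (ltnP r (2 * npairs)) => [r_lt2|r_ge].
  have [k [k_lt block_k]] : exists k, k + 2 < nreg /\ forall j, j <= 2 -> block (k + j) = r./2.
    by apply: block_witness; lia.
  case: (boolP (odd r)) => r_odd.
    have kj_lt j : j <= 2 -> k + j < nreg by lia.
    have [o0 b0 r0] := bottom_ownerP (kj_lt 0 isT).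
    have [o1 b1 r1] := bottom_ownerP (kj_lt 1 isT).
    have [o2 b2 r2] := bottom_ownerP (kj_lt 2 isT).
    exists (bottom_owner (k + 0)), false, (bottom_owner (k + 1)), false,
      (bottom_owner (k + 2)), false.
    split=> //; first (split=> E; [move: b0 b1 | move: b0 b2 | move: b1 b2]; rewrite E; lia).
    by split; rewrite /= ?r0 ?r1 ?r2 block_k //; lia.
  have top_k j : j <= 2 -> (pattern_cell (k + j) true).1 = r.
    by move=> j_le; rewrite /= /side_row /top_row ifT ?block_k //; lia.
  exists (k + 0), true, (k + 1), true, (k + 2), true.
  by split; [lia | lia | lia | split; lia | split; apply: top_k].
have n1_odd : odd n1 by case: (boolP (odd n1)) => // /even_n1; lia.
have r_mid : r = mid_row by rewrite odd_mid //; move: n1E; rewrite n1_odd; lia.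
have [moved0 moved1] : moved moved_lo /\ moved moved_lo.+1.
  by have := odd_nextra n1_odd; rewrite /moved; split; apply/andP; split; lia.
exists moved_lo, false, moved_lo.+1, false, nreg, true.
have [lo_reg lo1_reg] : moved_lo < nreg /\ moved_lo.+1 < nreg by move: moved1; rewrite /moved; lia.
split; [lia | lia | lia | split; lia | ].
by rewrite /= /side_row /top_row /bottom_row lo_reg lo1_reg ltnn moved0 moved1 r_mid.
Qed.

Definition second_layer k := if k + m < nreg then k + m else nreg + (k - moved_lo).

Lemma second_layerP k : k < m -> k + m < n3 ->
  [/\ m <= second_layer k, second_layer k < n3 & base (second_layer k) %% m = k].
Proof.
have [[_ _ _ m_le_nreg n3E] _ _] := pattern_arith.
move=> k_lt k_m_lt; rewrite /second_layer /base; case: ifP => [reg|ext].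
  by rewrite reg modnDr modn_small //; split; lia.
have ext' : (nreg + (k - moved_lo) < nreg) = false by lia.
have loE : moved_lo = nreg - m by [].
by rewrite ext' modn_small; [split | ]; lia.
Qed.

Lemma pattern_col_in_three_layers c : c < m ->
  in_three_layers n3 (fun l b => (pattern_cell l b).2 = c).
Proof.
have [[_ _ _ m_le_nreg n3E] [shift_gt0 shift_lt shift_ge _ m_shift_le] _] := pattern_arith.
have base_small k : k < m -> base k = k by move=> k_lt; rewrite /base ifT //; lia.
move=> c_lt; case: (ltnP c shift) => [c_lt_sh|c_ge_sh].
  have c_m_lt : c + m < n3 by lia.
  have [ge lt baseE] := second_layerP c_lt c_m_lt.
  exists c, true, (c + m - shift), false, (second_layer c), true.
  split; [lia | lia | lia | split; lia | split].
  - by rewrite /= base_small // addn0 modn_small.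
  - by rewrite /= base_small; [rewrite subnK ?modnDr ?modn_small | ]; lia.
  - by rewrite /= addn0.
have [k_lt k_m_lt] : c - shift < m /\ c - shift + m < n3 by lia.
have [ge lt baseE] := second_layerP k_lt k_m_lt.
exists c, true, (c - shift), false, (second_layer (c - shift)), false.
split; [lia | lia | lia | split; lia | split].
- by rewrite /= base_small // addn0 modn_small.
- by rewrite /= base_small; [rewrite subnK ?modn_small | ]; lia.
- by rewrite /= -modnDml baseE subnK // modn_small.
Qed.

End Pattern.

Theorem mainTheorem10 (n1 n2 n3 : nat) :
  3 <= n1 -> 3 <= n2 -> n1 <= n3 -> n2 <= n3 ->
  3 * maxn n1 n2 <= 2 * n3 -> 2 * n3 <= n1 * n2 ->
  metric_dim_eq (@Kadj n1.+1 n2.+1 n3.+1) (2 * n3 + 1).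
Proof.
(* n1 <= n3 and n2 <= n3 already follow from 3 * maxn n1 n2 <= 2 * n3. *)
move=> n1_ge3 n2_ge3 _ _ max_le prod_ge.
have [n1_gt1 n2_gt1 n3_gt1] : [/\ 1 < n1, 1 < n2 & 1 < n3] by split; lia.
apply: (Kadj_metric_dim n1_gt1 n2_gt1 n3_gt1 (cell := pattern_cell n1 n2 n3)).
- exact: pattern_cell_bounded.
- exact: pattern_cell_rect.
- exact: pattern_cell_inj.
- exact: pattern_anticell_inj.
- exact: pattern_row_in_three_layers.
- exact: pattern_col_in_three_layers.
Qed.
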